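(* Let $\mathcal{H}$ be a real Hilbert space, $A_1,A_2:\mathcal{H}\rightrightarrows\mathcal{H}$ maximally monotone, $\Gamma\subseteq\mathbb{R}_{++}$ a nonempty closed interval, $T_\gamma:=\mathrm{Id}-J_{\gamma A_1}+J_{\gamma A_2}(2J_{\gamma A_1}-\mathrm{Id})$ for $\gamma\in\Gamma$, and $\mathcal{Q}_{\delta\leftarrow\gamma}x:=\frac{\delta}{\gamma}x+\big(1-\frac{\delta}{\gamma}\big)J_{\gamma A_1}x$ for $\delta,\gamma\in\mathbb{R}_{++}$, $x\in\mathcal{H}$. Then for any nonempty bounded set $S\subseteq\bigcup_{\gamma\in\Gamma}(\operatorname{Fix}T_\gamma\times\{\gamma\})$ there exists $L\ge0$ such that $\|\mathcal{Q}_{\delta\leftarrow\gamma}x-\mathcal{Q}_{\gamma\leftarrow\gamma}x\|\le L|\delta-\gamma|$ for all $\delta\in\Gamma$ and all $(x,\gamma)\in S$.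
   Context: $J_A=(\mathrm{Id}+A)^{-1}$ is the resolvent of $A$; $\operatorname{Fix}T=\{x:Tx=x\}$. *)

From HB Require Import structures.
From mathcomp Require Import all_boot all_order all_algebra.
From mathcomp Require Import boolp classical_sets reals.
Set Implicit Arguments. Unset Strict Implicit. Unset Printing Implicit Defensive.
Import Order.TTheory GRing.Theory Num.Theory.
Local Open Scope ring_scope.
Local Open Scope classical_set_scope.

Section Hilbert.
Variables (R : realType) (V : lmodType R) (ip : V -> V -> R).

Definition is_inner_product : Prop :=
  [/\ forall x y, ip x y = ip y x,
      forall a x y z, ip (a *: x + y) z = a * ip x z + ip y z
    & forall x, x != 0 -> 0 < ip x x].

Definition hnorm (x : V) : R := Num.sqrt (ip x x).

Definition hcomplete : Prop :=
  forall u : nat -> V,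
    (forall e : R, 0 < e -> exists N, forall m n, (N <= m)%N -> (N <= n)%N ->
        hnorm (u m - u n) < e) ->
    exists l : V, forall e : R, 0 < e -> exists N, forall n, (N <= n)%N ->
        hnorm (u n - l) < e.

Definition is_hilbert : Prop := is_inner_product /\ hcomplete.

(* set-valued operators V ⇉ V, given by their graphs: A x u <-> u ∈ A x *)
Definition monotone (A : V -> set V) : Prop :=
  forall x y u v, A x u -> A y v -> 0 <= ip (x - y) (u - v).

Definition maximally_monotone (A : V -> set V) : Prop :=
  monotone A /\
  forall B : V -> set V, monotone B -> (forall x u, A x u -> B x u) ->
    forall x u, B x u -> A x u.

End Hilbert.

Section Resolvent.
Variables (R : realType) (V : lmodType R).

Definition scale_op (g : R) (A : V -> set V) : V -> set V :=
  fun x => [set g *: u | u in A x].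

(* resolvent J_B = (Id + B)^{-1}: J_B x is some p with x ∈ p + B p
   (unique when B is monotone; default value x if no such p exists) *)
Definition resolvent (B : V -> set V) (x : V) : V :=
  xget x [set p | exists2 u, B p u & x = p + u].

Definition DR_op (A1 A2 : V -> set V) (g : R) (x : V) : V :=
  x - resolvent (scale_op g A1) x
    + resolvent (scale_op g A2) (2%:R *: resolvent (scale_op g A1) x - x).

Definition Qop (A1 : V -> set V) (d g : R) (x : V) : V :=
  (d / g) *: x + (1 - d / g) *: resolvent (scale_op g A1) x.

End Resolvent.

(** The displacement [x - J_{gA1} x] equals [g u] for some [u] in [A1 (J_{gA1} x)].
    Monotonicity against one point [(p0, u0)] of the graph of [A1], which is
    nonempty by maximality, gives [|g u|^2 <= |x - p0|^2 + |g u0|^2], hence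
    [|x - J_{gA1} x|^2 <= B := 2M^2 + 2|p0|^2 + M^2 |u0|^2] whenever [|x|, g <= M].
    Since [Q_{d<-g} x - Q_{g<-g} x = (d/g - 1) (x - J_{gA1} x)] and [g] stays above
    the left end [a > 0] of the interval, [L = sqrt B / a] works. *)
From HB Require Import structures.
From mathcomp Require Import all_boot all_order all_algebra.
From mathcomp Require Import boolp classical_sets reals.
From mathcomp Require Import ring lra.
Import Order.TTheory GRing.Theory Num.Theory.
Local Open Scope ring_scope.
Local Open Scope classical_set_scope.
Set Implicit Arguments. Unset Strict Implicit. Unset Printing Implicit Defensive.

Section InnerProduct.
Variables (R : realType) (V : lmodType R) (ip : V -> V -> R).
Hypothesis hip : is_inner_product ip.

Lemma ipC x y : ip x y = ip y x.
Proof. by case: hip. Qed.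

Lemma ipDl x y z : ip (x + y) z = ip x z + ip y z.
Proof. by case: hip => _ ipL _; rewrite -{1}(scale1r x) ipL mul1r. Qed.

Lemma ip0l z : ip 0 z = 0.
Proof. by have := ipDl 0 0 z; rewrite addr0 -{1}[ip 0 z]addr0 => /addrI. Qed.

Lemma ipZl a x z : ip (a *: x) z = a * ip x z.
Proof. by case: hip => _ ipL _; rewrite -(addr0 (a *: x)) ipL ip0l addr0. Qed.

Lemma ipDr x y z : ip z (x + y) = ip z x + ip z y.
Proof. by rewrite ipC ipDl ipC (ipC y). Qed.

Lemma ipZr a x z : ip z (a *: x) = a * ip z x.
Proof. by rewrite ipC ipZl ipC. Qed.

Lemma ipBr x y z : ip z (x - y) = ip z x - ip z y.
Proof. by rewrite ipDr -scaleN1r ipZr mulN1r. Qed.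

Lemma ip_ge0 x : 0 <= ip x x.
Proof.
have [->|x_neq0] := eqVneq x 0; first by rewrite ip0l.
by case: hip => _ _ /(_ x x_neq0) /ltW.
Qed.

Lemma ip_sqrD x y : ip (x + y) (x + y) = ip x x + 2 * ip x y + ip y y.
Proof. by rewrite ipDl !ipDr (ipC y x); ring. Qed.

Lemma ip_sqrB_le x y : ip (x - y) (x - y) <= 2 * ip x x + 2 * ip y y.
Proof.
have := ip_ge0 (x + y); rewrite ip_sqrD ip_sqrD.
rewrite -scaleN1r !(ipZl, ipZr); lra.
Qed.

Lemma hnormZ a x : hnorm ip (a *: x) = `|a| * hnorm ip x.
Proof. by rewrite /hnorm ipZl ipZr mulrA -expr2 sqrtrM ?sqr_ge0 // sqrtr_sqr. Qed.

Lemma ip_le_sqr_hnorm x M : hnorm ip x <= M -> ip x x <= M ^+ 2.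
Proof.
move=> xM; rewrite -(sqr_sqrtr (ip_ge0 x)) ler_sqr ?nnegrE ?sqrtr_ge0 //.
exact: le_trans (sqrtr_ge0 _) xM.
Qed.

End InnerProduct.

Section Resolvent.
Variables (R : realType) (V : lmodType R) (ip : V -> V -> R).
Hypothesis hip : is_inner_product ip.

Lemma maximally_monotone_graph_neq0 (A : V -> set V) :
  maximally_monotone ip A -> exists p u, A p u.
Proof.
case=> _ maxA; apply/not_existsP => graph0.
have origin_mono : monotone ip (fun x u => x = 0 /\ u = 0).
  by move=> x y u v [-> ->] [-> ->]; rewrite subrr ip0l.
have A00 : A 0 0.
  apply: (maxA _ origin_mono) => // x u Axu.
  by case: (graph0 x); exists u.
by apply: (graph0 0); exists 0.
Qed.

Lemma resolvent_out (B : V -> set V) x :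
  ~ (exists p, exists2 u, B p u & x = p + u) -> resolvent B x = x.
Proof. by move=> nsol; apply: xgetPN => p [u Bpu xE]; apply: nsol; exists p, u. Qed.

Lemma resolvent_scaleP (A : V -> set V) g x :
  (exists p, exists2 w, scale_op g A p w & x = p + w) ->
  exists2 u, A (resolvent (scale_op g A) x) u &
    x = resolvent (scale_op g A) x + g *: u.
Proof. by move=> /(xgetPex x) [_ [u Au <-] xE]; exists u. Qed.

Lemma monotone_scaled_step_le (A : V -> set V) p0 u0 p u g :
  monotone ip A -> A p0 u0 -> A p u -> 0 <= g ->
  ip (g *: u) (g *: u) <=
    ip (p + g *: u - p0) (p + g *: u - p0) + ip (g *: u0) (g *: u0).
Proof.
move=> monoA Ap0u0 Apu g_ge0.
set q := p - p0; set v := g *: u; set v0 := g *: u0.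
have -> : p + v - p0 = q + v by rewrite /q addrAC.
(* monotonicity gives [<q, v> >= <q, v0>], which makes [|q + v|^2 + |v0|^2]
   dominate [|q + v0|^2 + |v|^2] *)
have qv_ge : ip q v0 <= ip q v.
  rewrite -subr_ge0 -ipBr // /v /v0 -scalerBr ipZr //.
  exact/mulr_ge0/monoA.
have := ip_ge0 hip (q + v0); rewrite !ip_sqrD //; lra.
Qed.

Lemma resolvent_displacement_le (A : V -> set V) p0 u0 g x :
  monotone ip A -> A p0 u0 -> 0 <= g ->
  ip (x - resolvent (scale_op g A) x) (x - resolvent (scale_op g A) x) <=
    ip (x - p0) (x - p0) + g ^+ 2 * ip u0 u0.
Proof.
move=> monoA Ap0u0 g_ge0; set J := resolvent (scale_op g A) x.
have u0_term : g ^+ 2 * ip u0 u0 = ip (g *: u0) (g *: u0).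
  by rewrite ipZl // ipZr // mulrA -expr2.
have [sol|nsol] := pselect (exists p, exists2 w, scale_op g A p w & x = p + w).
- have [u AJu xE] := resolvent_scaleP sol.
  rewrite -/J in AJu xE.
  have -> : x - J = g *: u by rewrite {1}xE addrAC subrr add0r.
  rewrite u0_term xE.
  exact: monotone_scaled_step_le monoA Ap0u0 AJu g_ge0.
- rewrite /J resolvent_out // subrr ip0l //.
  by rewrite addr_ge0 ?mulr_ge0 ?sqr_ge0 ?ip_ge0.
Qed.

End Resolvent.

Lemma Qop_sub_diag (R : realType) (V : lmodType R) (A : V -> set V) d g x :
  g != 0 ->
  Qop A d g x - Qop A g g x = (d / g - 1) *: (x - resolvent (scale_op g A) x).
Proof.
move=> g_neq0; rewrite /Qop divff // subrr scale0r addr0 scale1r.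
by rewrite scalerBl scale1r scalerBr scalerBl scalerBl !scale1r opprB addrAC.
Qed.

Lemma hnorm_Qop_sub_diag (R : realType) (V : lmodType R) (ip : V -> V -> R)
    (A : V -> set V) d g x :
  is_inner_product ip -> 0 < g ->
  hnorm ip (Qop A d g x - Qop A g g x) =
    `|d - g| / g * hnorm ip (x - resolvent (scale_op g A) x).
Proof.
move=> hip g_gt0; rewrite Qop_sub_diag ?gt_eqF // hnormZ //.
by rewrite -{1}(divff (lt0r_neq0 g_gt0)) -mulrBl normrM normfV (gtr0_norm g_gt0).
Qed.

Theorem lemma4p1 (R : realType) (V : lmodType R) (ip : V -> V -> R)
  (A1 A2 : V -> set V) (Gam : set R) (S : set (V * R)) :
  is_hilbert ip ->
  maximally_monotone ip A1 -> maximally_monotone ip A2 ->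
  (* Γ ⊆ R_{++} is a nonempty closed interval: [a,b] or [a,+∞) with 0 < a <= b *)
  (exists a : R, 0 < a /\
     ((exists2 b : R, a <= b & Gam = [set g | a <= g <= b]) \/
      Gam = [set g | a <= g])) ->
  (* S is nonempty, bounded, and S ⊆ ⋃_{γ∈Γ} Fix T_γ × {γ} *)
  S !=set0 ->
  (exists M : R, forall x g, S (x, g) -> hnorm ip x <= M /\ `|g| <= M) ->
  (forall x g, S (x, g) -> Gam g /\ DR_op A1 A2 g x = x) ->
  exists L : R, 0 <= L /\
    forall d, Gam d -> forall x g, S (x, g) ->
      hnorm ip (Qop A1 d g x - Qop A1 g g x) <= L * `|d - g|.
Proof.
move=> [hip _] maxA1 _ [a [a_gt0 GamE]] _ [M SM] SFix.
have Gam_ge : forall g, Gam g -> a <= g.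
  by move=> g; case: GamE => [[b _ ->]|->] //= /andP[].
have [p0 [u0 Ap0u0]] := maximally_monotone_graph_neq0 hip maxA1.
set B := 2 * M ^+ 2 + 2 * ip p0 p0 + M ^+ 2 * ip u0 u0.
exists (Num.sqrt B / a); split; first by rewrite divr_ge0 ?sqrtr_ge0 ?ltW.
move=> d _ x g Sxg; have [xM gM] := SM _ _ Sxg.
have [Gg _] := SFix _ _ Sxg.
have g_gt0 : 0 < g by apply: lt_le_trans a_gt0 (Gam_ge _ Gg).
set J := resolvent (scale_op g A1) x.
have displ_le : ip (x - J) (x - J) <= B.
  have g_le_M : g <= M by rewrite -(gtr0_norm g_gt0).
  have g2M : g ^+ 2 <= M ^+ 2.
    by rewrite ler_sqr ?nnegrE ?(ltW g_gt0) ?(le_trans (ltW g_gt0) g_le_M).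
  have := resolvent_displacement_le hip x maxA1.1 Ap0u0 (ltW g_gt0).
  have := ip_sqrB_le hip x p0; have := ip_le_sqr_hnorm hip xM.
  have := ler_wpM2r (ip_ge0 hip u0) g2M; rewrite /B -/J; lra.
rewrite hnorm_Qop_sub_diag // -/J [X in _ <= X]mulrC -mulrA ler_wpM2l //.
rewrite mulrC; apply: ler_pM.
- exact: sqrtr_ge0.
- by rewrite invr_ge0 ltW.
- exact: ler_wsqrtr.
- by rewrite lef_pV2 ?posrE ?Gam_ge.
Qed.
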